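(* Let $n\ge 4$ and let $R(F_n^1)$ be the complex Leibniz algebra with basis $\{h_1,h_2,e_1,\dots,e_n\}$ and nonzero products $[e_i,e_1]=e_{i+1}$ ($2\le i\le n-1$), $[e_1,h_2]=e_1$, $[h_2,e_1]=-e_1$, $[e_i,h_1]=e_i$ ($2\le i\le n$), $[e_i,h_2]=(i-1)e_i$ ($2\le i\le n$). Then $(d,D)$ is a biderivation iff there exist $\alpha_1,\alpha_2,\alpha_3,\beta_3,\dots,\beta_{n+1}\in\mathbb C$ such that, with $e_{n+1}=0$, $$d(h_1)=0,\quad d(h_2)=-\alpha_2e_1,\quad d(e_1)=\alpha_3e_1,\quad d(e_i)=(\alpha_1+(i-1)\alpha_3)e_i+\alpha_2e_{i+1}\ (2\le i\le n),$$ $$D(h_1)=\sum_{i=2}^n\beta_{i+1}e_i,\quad D(h_2)=-\alpha_2e_1+\sum_{i=2}^n(i-1)\beta_{i+1}e_i,\quad D(e_1)=\alpha_3e_1+\sum_{i=3}^n\beta_ie_i,\quad D(e_i)=0\ (2\le i\le n).$$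
   Context: Leibniz algebras are right Leibniz over $\mathbb C$: $[x,[y,z]]=[[x,y],z]-[[x,z],y]$. Unlisted products are zero. A derivation is a linear $d$ with $d([x,y])=[d(x),y]+[x,d(y)]$; an anti-derivation is a linear $D$ with $D([x,y])=[D(x),y]-[D(y),x]$; a biderivation is a pair $(d,D)$ of a derivation and an anti-derivation with $[x,d(y)]=[x,D(y)]$ for all $x,y$. *)

(* The ground field C is  R[i]  (complex numbers over a
   real closed field, from mathcomp-real-closed) for an arbitrary
   R : realType, i.e. C is (isomorphic to) the field of complex numbers. *)
From HB Require Import structures.
From mathcomp Require Import all_boot all_order all_algebra.
From mathcomp Require Import reals complex.
Set Implicit Arguments. Unset Strict Implicit. Unset Printing Implicit Defensive.
Import Order.TTheory GRing.Theory Num.Theory.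
Local Open Scope ring_scope.
Local Open Scope complex_scope.

Section RFn1.
Variable R : realType.
Local Notation C := R[i].
Variable n : nat.

(* Vectors of R(F_n^1) are row vectors of length n+2 with respect to the
   ordered basis (h1, h2, e1, ..., en): index 0 = h1, index 1 = h2,
   index k+1 = e_k (1 <= k <= n). *)
Definition V := 'rV[C]_(n.+2).

Definition bvec (k : nat) : V := \row_(j < n.+2) (if j == k :> nat then 1 else 0).

Definition h1 : V := bvec 0.
Definition h2 : V := bvec 1.
(* e k for 1 <= k <= n; e k = 0 otherwise (in particular e (n+1) = 0). *)
Definition e (k : nat) : V := if (1 <= k <= n)%N then bvec k.+1 else 0.

Definition brb (i j : nat) : V :=
  if (i == 1%N) && (j == 2%N) then - e 1            (* [h2,e1] = -e1 *)
  else if (i == 2%N) && (j == 1%N) then e 1         (* [e1,h2] = e1 *)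
  else if (3 <= i)%N then
    (* b_i = e_a with a = i - 1 >= 2 *)
    if j == 2%N then e i                            (* [e_a,e1] = e_{a+1} *)
    else if j == 0%N then e i.-1                    (* [e_a,h1] = e_a *)
    else if j == 1%N then (i.-2)%:R *: e i.-1       (* [e_a,h2] = (a-1) e_a *)
    else 0
  else 0.

Definition bracket (x y : V) : V :=
  \sum_(i < n.+2) \sum_(j < n.+2) (x 0 i * y 0 j) *: brb i j.

Definition app (A : 'M[C]_(n.+2)) (x : V) : V := x *m A.

Definition is_derivation (d : 'M[C]_(n.+2)) : Prop :=
  forall x y, app d (bracket x y) = bracket (app d x) y + bracket x (app d y).

Definition is_antiderivation (D : 'M[C]_(n.+2)) : Prop :=
  forall x y, app D (bracket x y) = bracket (app D x) y - bracket (app D y) x.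

Definition is_biderivation (d D : 'M[C]_(n.+2)) : Prop :=
  [/\ is_derivation d, is_antiderivation D &
      forall x y, bracket x (app d y) = bracket x (app D y)].

End RFn1.

From Pilot Require Import Defs.
From HB Require Import structures.
From mathcomp Require Import all_boot all_order all_algebra.
From mathcomp Require Import reals complex.
From mathcomp Require Import ring zify.
Set Implicit Arguments. Unset Strict Implicit. Unset Printing Implicit Defensive.
Import Order.TTheory GRing.Theory Num.Theory.
Local Open Scope ring_scope.
Local Open Scope complex_scope.

(* The identities defining a biderivation are bilinear in (x, y), so they only
   need to be checked on pairs of basis vectors; in coordinates they become
   finitely many linear equations in the matrix entries of d and D.  In this
   system right multiplication by h2, which acts on e_k with the distinct
   weights k - 1, separates coordinates: comparing weights kills all entries of
   d(e_k) except those along e_k and e_(k+1), and the relation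
   [e_k, e_1] = e_(k+1) makes the diagonal entries affine in k.  The identity
   [x, d y] = [x, D y], tested against x = e_2 and e_3, makes D agree with d in
   the h1, h2, e1 components, and the anti-derivation identity then leaves only
   D(h1) free.  Conversely these maps satisfy every equation, by a finite
   check. *)

Lemma big_nat_single (T : zmodType) a b p (G : nat -> T) :
  (forall i, (a <= i < b)%N -> i != p -> G i = 0) ->
  \sum_(a <= i < b) G i = if (a <= p < b)%N then G p else 0.
Proof.
move=> G0; case: ifP => Hp.
  rewrite (bigD1_seq p) ?mem_index_iota ?iota_uniq //= big1_seq ?addr0 // => i.
  by rewrite mem_index_iota => /andP[? ?]; apply: G0.
rewrite big1_seq // => i; rewrite mem_index_iota => Hi; apply: G0 => //.
by apply: contraFneq Hp => <-.
Qed.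

Lemma big_nat_vanish (T : zmodType) a b (F : nat -> T) :
  (a <= b)%N -> (forall j, (a <= j)%N -> F j = 0) ->
  \sum_(0 <= j < b) F j = \sum_(0 <= j < a) F j.
Proof.
move=> Hab F0; rewrite (big_cat_nat (leq0n a) Hab) /= -[RHS]addr0; congr (_ + _).
by rewrite big_nat_cond big1 // => j /andP[/andP[Hj _] _]; apply: F0.
Qed.

Lemma and4_iff (P0 P1 P2 P3 Q0 Q1 Q2 Q3 : Prop) :
  (P0 <-> Q0) -> (P1 <-> Q1) -> (P2 <-> Q2) -> (P3 <-> Q3) ->
  [/\ P0, P1, P2 & P3] <-> [/\ Q0, Q1, Q2 & Q3].
Proof. by move=> [? ?] [? ?] [? ?] [? ?]; split=> -[*]; split; auto. Qed.

Lemma natr_mul_cancel (R : numDomainType) (p q : nat) (x : R) :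
  p != q -> p%:R * x = q%:R * x -> x = 0.
Proof.
move=> Hpq /eqP; rewrite -subr_eq0 -mulrBl mulf_eq0 subr_eq0 eqr_nat (negPf Hpq).
by move/eqP.
Qed.

Lemma eqSnF k : (k.+1 == k) = false. Proof. by apply/eqP; lia. Qed.

Lemma eq_from_eqn (T : zmodType) (x y l r : T) : l = r -> x - y = l - r -> x = y.
Proof. by move=> ->; rewrite subrr => /subr0_eq. Qed.

Lemma eq_from_eqn2 (T : zmodType) (x y l1 r1 l2 r2 : T) : l1 = r1 -> l2 = r2 ->
  x - y = (l1 - r1) - (l2 - r2) -> x = y.
Proof. by move=> -> ->; rewrite !subrr => /subr0_eq. Qed.

Section Coordinates.
Variables (R : realType) (n : nat).
Local Notation C := R[i].
Local Notation N := n.+2.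
Local Notation V := (V R n).
Local Notation bvec := (bvec R n).
Local Notation e := (e R n).
Local Notation brb := (brb R n).
Local Notation bracket := (@bracket R n).

Definition ncoord (x : V) (t : nat) : C := if (t < N)%N then x ord0 (inord t) else 0.

Definition delta (j s : nat) : C := (s == j)%:R.

Lemma ncoord_ord (x : V) (i : 'I_N) : ncoord x i = x ord0 i.
Proof. by rewrite /ncoord ltn_ord inord_val. Qed.

Lemma row_ncoordP (x y : V) : (forall t, (t < N)%N -> ncoord x t = ncoord y t) -> x = y.
Proof. by move=> Exy; apply/rowP => j; rewrite -!ncoord_ord Exy. Qed.

Lemma ncoord0 t : ncoord 0 t = 0.
Proof. by rewrite /ncoord; case: ifP; rewrite ?mxE. Qed.
Lemma ncoordD x y t : ncoord (x + y) t = ncoord x t + ncoord y t.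
Proof. by rewrite /ncoord; case: ifP; rewrite ?mxE ?addr0. Qed.
Lemma ncoordN x t : ncoord (- x) t = - ncoord x t.
Proof. by rewrite /ncoord; case: ifP; rewrite ?mxE ?oppr0. Qed.
Lemma ncoordB x y t : ncoord (x - y) t = ncoord x t - ncoord y t.
Proof. by rewrite ncoordD ncoordN. Qed.
Lemma ncoordZ a x t : ncoord (a *: x) t = a * ncoord x t.
Proof. by rewrite /ncoord; case: ifP; rewrite ?mxE ?mulr0. Qed.
Lemma ncoord_sum (I : Type) (r : seq I) (P : pred I) (F : I -> V) t :
  ncoord (\sum_(i <- r | P i) F i) t = \sum_(i <- r | P i) ncoord (F i) t.
Proof. by apply: (big_morph (ncoord^~ t)) => [x y|]; rewrite ?ncoordD ?ncoord0. Qed.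

Lemma ncoord_out x t : (N <= t)%N -> ncoord x t = 0.
Proof. by rewrite /ncoord leqNgt => /negPf ->. Qed.

Lemma ncoord_bvec k t : (t < N)%N -> ncoord (bvec k) t = delta k t.
Proof. by move=> Ht; rewrite /ncoord Ht mxE inordK // /delta; case: eqP. Qed.

Lemma bvec_out k : (N <= k)%N -> bvec k = 0.
Proof.
move=> Hk; apply/rowP => j; rewrite /Defs.bvec !mxE; case: eqP => // Ej.
by have := ltn_ord j; rewrite Ej; lia.
Qed.

Lemma e_bvec k : (0 < k)%N -> e k = bvec k.+1.
Proof. by move=> Hk; rewrite /e; case: ifP => // Hkn; rewrite bvec_out //; lia. Qed.

Lemma ncoord_e k t : (0 < k)%N -> (t < N)%N -> ncoord (e k) t = delta k.+1 t.
Proof. by move=> Hk Ht; rewrite e_bvec // ncoord_bvec. Qed.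

Lemma row_sum_bvec (x : V) : x = \sum_(i < N) x ord0 i *: bvec i.
Proof.
apply/row_ncoordP => t Ht; rewrite ncoord_sum (bigD1 (Ordinal Ht)) //= big1 => [|i Hi].
  by rewrite ncoordZ ncoord_bvec // /delta eqxx mulr1 addr0 -(ncoord_ord x (Ordinal Ht)).
by move: Hi; rewrite ncoordZ ncoord_bvec // /delta -val_eqE /= eq_sym => /negPf ->; rewrite mulr0.
Qed.

Lemma bilinear_eq_bvec (Phi Psi : V -> V -> V) :
  (forall x1 x2 y, Phi (x1 + x2) y = Phi x1 y + Phi x2 y) ->
  (forall x1 x2 y, Psi (x1 + x2) y = Psi x1 y + Psi x2 y) ->
  (forall a x y, Phi (a *: x) y = a *: Phi x y) ->
  (forall a x y, Psi (a *: x) y = a *: Psi x y) ->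
  (forall x y1 y2, Phi x (y1 + y2) = Phi x y1 + Phi x y2) ->
  (forall x y1 y2, Psi x (y1 + y2) = Psi x y1 + Psi x y2) ->
  (forall a x y, Phi x (a *: y) = a *: Phi x y) ->
  (forall a x y, Psi x (a *: y) = a *: Psi x y) ->
  (forall i j : 'I_N, Phi (bvec i) (bvec j) = Psi (bvec i) (bvec j)) ->
  forall x y, Phi x y = Psi x y.
Proof.
move=> PhiDl PsiDl PhiZl PsiZl PhiDr PsiDr PhiZr PsiZr Ebasis x y.
rewrite (row_sum_bvec x); apply: (big_ind (fun u => Phi u y = Psi u y)) => [|u v Eu Ev|i _].
- by rewrite -(scale0r 0) PhiZl PsiZl !scale0r.
- by rewrite PhiDl PsiDl Eu Ev.
rewrite PhiZl PsiZl (row_sum_bvec y); congr (_ *: _).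
apply: (big_ind (fun v => Phi _ v = Psi _ v)) => [|u v Eu Ev|j _].
- by rewrite -(scale0r 0) PhiZr PsiZr !scale0r.
- by rewrite PhiDr PsiDr Eu Ev.
by rewrite PhiZr PsiZr Ebasis.
Qed.

Lemma appD (A : 'M[C]_N) x y : app A (x + y) = app A x + app A y.
Proof. exact: mulmxDl. Qed.
Lemma appZ (A : 'M[C]_N) a x : app A (a *: x) = a *: app A x.
Proof. by rewrite /app scalemxAl. Qed.
Lemma app0 (A : 'M[C]_N) : app A 0 = 0.
Proof. exact: mul0mx. Qed.
Lemma appN (A : 'M[C]_N) x : app A (- x) = - app A x.
Proof. exact: mulNmx. Qed.

Lemma bracketDl x1 x2 y : bracket (x1 + x2) y = bracket x1 y + bracket x2 y.
Proof.
rewrite /bracket -big_split; apply: eq_bigr => i _.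
by rewrite -big_split; apply: eq_bigr => j _; rewrite mxE mulrDl scalerDl.
Qed.
Lemma bracketZl a x y : bracket (a *: x) y = a *: bracket x y.
Proof.
rewrite /bracket scaler_sumr; apply: eq_bigr => i _.
by rewrite scaler_sumr; apply: eq_bigr => j _; rewrite mxE scalerA mulrA.
Qed.
Lemma bracketDr x y1 y2 : bracket x (y1 + y2) = bracket x y1 + bracket x y2.
Proof.
rewrite /bracket -big_split; apply: eq_bigr => i _.
by rewrite -big_split; apply: eq_bigr => j _; rewrite mxE mulrDr scalerDl.
Qed.
Lemma bracketZr a x y : bracket x (a *: y) = a *: bracket x y.
Proof.
rewrite /bracket scaler_sumr; apply: eq_bigr => i _.
by rewrite scaler_sumr; apply: eq_bigr => j _; rewrite mxE scalerA mulrCA.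
Qed.

Lemma bracket_ncoord x y : bracket x y =
  \sum_(0 <= i < N) \sum_(0 <= j < N) (ncoord x i * ncoord y j) *: brb i j.
Proof.
rewrite /bracket big_mkord; apply: eq_bigr => i _.
by rewrite big_mkord; apply: eq_bigr => j _; rewrite !ncoord_ord.
Qed.

Lemma bracket_bvec i j : (i < N)%N -> (j < N)%N -> bracket (bvec i) (bvec j) = brb i j.
Proof.
move=> Hi Hj; rewrite bracket_ncoord (big_nat_single (p := i)) => [|k /andP[_ Hk] Eki]; last first.
  by rewrite big1 // => l _; rewrite ncoord_bvec // /delta (negPf Eki) mul0r scale0r.
rewrite Hi (big_nat_single (p := j)) => [|l /andP[_ Hl] Elj]; last first.
  by rewrite !ncoord_bvec // /delta (negPf Elj) mulr0 scale0r.
by rewrite Hj !ncoord_bvec // /delta !eqxx mulr1 scale1r.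
Qed.

Lemma brb_right_ge3 i j : brb i j.+3 = 0.
Proof. by rewrite /Defs.brb /= !andbF; case: ifP. Qed.

Lemma brb_left_ge3 i : (3 <= i)%N -> (i < N)%N ->
  [/\ brb i 0 = bvec i, brb i 1 = i.-2%:R *: bvec i & brb i 2 = bvec i.+1].
Proof. by case: i => [|[|[|a]]] // _ Hi; rewrite /Defs.brb /= !e_bvec. Qed.

Lemma bracket_ncoord_trunc x y : bracket x y =
  \sum_(0 <= i < N.+3) \sum_(0 <= j < 3) (ncoord x i * ncoord y j) *: brb i j.
Proof.
have HN : (N <= N.+3)%N by lia.
rewrite bracket_ncoord -(big_nat_vanish HN) => [|i Hi]; last first.
  by rewrite big1 // => j _; rewrite (ncoord_out x Hi) mul0r scale0r.
apply: eq_bigr => i _; rewrite -(big_nat_vanish HN) => [|j Hj].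
  by apply: big_nat_vanish => // -[|[|[|j]]] //; rewrite brb_right_ge3 scaler0.
by rewrite (ncoord_out y Hj) mulr0 scale0r.
Qed.

Definition cbracket (x y : nat -> C) (t : nat) : C :=
  match t with
  | 0%N | 1%N => 0
  | 2%N => x 2%N * y 1%N - x 1%N * y 2%N
  | 3%N => x 3%N * (y 0%N + y 1%N)
  | s.+4 => x s.+4 * (y 0%N + s.+2%:R * y 1%N) + x s.+3 * y 2%N
  end.

Lemma ncoord_bracket x y t : (t < N)%N ->
  ncoord (bracket x y) t = cbracket (ncoord x) (ncoord y) t.
Proof.
move=> Ht; rewrite bracket_ncoord_trunc ncoord_sum.
under eq_bigr do rewrite ncoord_sum big_ltn // big_ltn // big_ltn // big_geq // addr0 !ncoordZ.
rewrite big_ltn // big_ltn // big_ltn //.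
rewrite (eq_big_nat _ _ (F2 := fun i => ncoord x i * ncoord y 0 * delta i t
    + ncoord x i * ncoord y 1 * (i.-2%:R * delta i t)
    + ncoord x i * ncoord y 2 * delta i.+1 t)); last first.
  move=> i /andP[Hi3 _]; case: (ltnP i N) => Hi; last by rewrite (ncoord_out x Hi) !mul0r !addr0.
  by have [-> -> ->] := brb_left_ge3 Hi3 Hi; rewrite ncoordZ !ncoord_bvec //; ring.
rewrite !big_split /= (big_nat_single (p := t)) => [|i _ Eit]; last first.
  by rewrite /delta eq_sym (negPf Eit) !mulr0.
rewrite (big_nat_single (p := t)) => [|i _ Eit]; last first.
  by rewrite /delta eq_sym (negPf Eit) !mulr0.
rewrite (big_nat_single (p := t.-1)) => [|i _ Eit]; last first.
  by rewrite /delta; case: eqP => [Et|]; [move: Eit; rewrite Et eqxx | rewrite mulr0].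
have brb0 j : brb 0 j = 0 by [].
rewrite !brb0 (_ : brb 1 0 = 0) // (_ : brb 1 1 = 0) // (_ : brb 1 2 = - e 1) //.
rewrite (_ : brb 2 0 = 0) // (_ : brb 2 1 = e 1) // (_ : brb 2 2 = 0) //.
rewrite !ncoord0 ncoordN ncoord_e //.
case: t Ht => [|[|[|[|s]]]] Ht; rewrite /delta /= ?ltnS ?(ltnW Ht) /=; try ring.
have [-> ->] : (s <= n)%N /\ (s <= n.+1)%N by lia.
by rewrite eqxx /=; ring.
Qed.

Definition coef (A : 'M[C]_N) (i t : nat) : C := ncoord (app A (bvec i)) t.

(* At i = N - 1 this mentions f N, the image of e_(n+1) = 0; hence the
   extensionality lemmas below ask for agreement up to i <= N. *)
Definition capp_brb (f : nat -> nat -> C) (i j t : nat) : C :=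
  match j with
  | 0%N => match i with a.+3 => f a.+3 t | _ => 0 end
  | 1%N => match i with 2%N => f 2%N t | a.+3 => a.+1%:R * f a.+3 t | _ => 0 end
  | 2%N => match i with 1%N => - f 2%N t | a.+3 => f a.+4 t | _ => 0 end
  | _ => 0
  end.

Lemma ncoord_app_brb (A : 'M[C]_N) i j t : (i < N)%N ->
  ncoord (app A (brb i j)) t = capp_brb (coef A) i j t.
Proof.
move=> Hi; case: j => [|[|[|j]]]; last by rewrite brb_right_ge3 app0 ncoord0.
all: case: i Hi => [|[|[|a]]] Hi; try by rewrite /Defs.brb /= ?e_bvec ?app0 ?appN ?ncoord0 ?ncoordN.
all: have [E0 E1 E2] := brb_left_ge3 (isT : (3 <= a.+3)%N) Hi.
all: by rewrite /= ?E0 ?E1 ?E2 ?appZ ?ncoordZ.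
Qed.

Lemma cbracket_ext x x' y y' t :
  (forall s, (s < N)%N -> x s = x' s) -> (forall s, (s < N)%N -> y s = y' s) ->
  (t < N)%N -> cbracket x y t = cbracket x' y' t.
Proof.
move=> Ex Ey Ht; case: t Ht => [|[|[|[|s]]]] Ht //=; rewrite !Ey ?Ex //; lia.
Qed.

Lemma cbracket_bvecl i y t : (t < N)%N -> cbracket (ncoord (bvec i)) y t = cbracket (delta i) y t.
Proof. by move=> Ht; apply: cbracket_ext => // s Hs; rewrite ncoord_bvec. Qed.

Lemma cbracket_bvecr x j t : (t < N)%N -> cbracket x (ncoord (bvec j)) t = cbracket x (delta j) t.
Proof. by move=> Ht; apply: cbracket_ext => // s Hs; rewrite ncoord_bvec. Qed.

Definition der_eqs (f : nat -> nat -> C) := forall i j t, (i < N)%N -> (j < N)%N -> (t < N)%N ->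
  capp_brb f i j t = cbracket (f i) (delta j) t + cbracket (delta i) (f j) t.

Definition antider_eqs (f : nat -> nat -> C) := forall i j t, (i < N)%N -> (j < N)%N -> (t < N)%N ->
  capp_brb f i j t = cbracket (f i) (delta j) t - cbracket (f j) (delta i) t.

Definition agree_eqs (f g : nat -> nat -> C) := forall i j t, (i < N)%N -> (j < N)%N -> (t < N)%N ->
  cbracket (delta i) (f j) t = cbracket (delta i) (g j) t.

Lemma is_derivationP (d : 'M[C]_N) : is_derivation d <-> der_eqs (coef d).
Proof.
split=> [Hd i j t Hi Hj Ht | Hd].
  have := congr1 (ncoord^~ t) (Hd (bvec i) (bvec j)).
  rewrite bracket_bvec // ncoord_app_brb // ncoordD !ncoord_bracket //.
  by rewrite cbracket_bvecl // cbracket_bvecr.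
apply: bilinear_eq_bvec => [x1 x2 y|x1 x2 y|a x y|a x y|x y1 y2|x y1 y2|a x y|a x y|i j].
- by rewrite bracketDl appD.
- by rewrite appD !bracketDl addrACA.
- by rewrite bracketZl appZ.
- by rewrite appZ !bracketZl scalerDr.
- by rewrite bracketDr appD.
- by rewrite appD !bracketDr addrACA.
- by rewrite bracketZr appZ.
- by rewrite appZ !bracketZr scalerDr.
apply: row_ncoordP => t Ht.
rewrite bracket_bvec // ncoord_app_brb // ncoordD !ncoord_bracket //.
by rewrite cbracket_bvecl // cbracket_bvecr // Hd.
Qed.

Lemma is_antiderivationP (D : 'M[C]_N) : is_antiderivation D <-> antider_eqs (coef D).
Proof.
split=> [HD i j t Hi Hj Ht | HD].
  have := congr1 (ncoord^~ t) (HD (bvec i) (bvec j)).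
  by rewrite bracket_bvec // ncoord_app_brb // ncoordB !ncoord_bracket // !cbracket_bvecr.
apply: bilinear_eq_bvec => [x1 x2 y|x1 x2 y|a x y|a x y|x y1 y2|x y1 y2|a x y|a x y|i j].
- by rewrite bracketDl appD.
- by rewrite appD bracketDl bracketDr opprD addrACA.
- by rewrite bracketZl appZ.
- by rewrite appZ bracketZl bracketZr scalerBr.
- by rewrite bracketDr appD.
- by rewrite appD bracketDr bracketDl opprD addrACA.
- by rewrite bracketZr appZ.
- by rewrite appZ bracketZl bracketZr scalerBr.
apply: row_ncoordP => t Ht.
by rewrite bracket_bvec // ncoord_app_brb // ncoordB !ncoord_bracket // !cbracket_bvecr // HD.
Qed.

Lemma bracket_app_eqP (d D : 'M[C]_N) :
  (forall x y, bracket x (app d y) = bracket x (app D y)) <-> agree_eqs (coef d) (coef D).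
Proof.
split=> [Hdd i j t Hi Hj Ht | Hdd].
  have := congr1 (ncoord^~ t) (Hdd (bvec i) (bvec j)).
  by rewrite !ncoord_bracket // !cbracket_bvecl.
apply: bilinear_eq_bvec => [x1 x2 y|x1 x2 y|a x y|a x y|x y1 y2|x y1 y2|a x y|a x y|i j].
- exact: bracketDl.
- exact: bracketDl.
- exact: bracketZl.
- exact: bracketZl.
- by rewrite appD bracketDr.
- by rewrite appD bracketDr.
- by rewrite appZ bracketZr.
- by rewrite appZ bracketZr.
apply: row_ncoordP => t Ht.
by rewrite !ncoord_bracket // !cbracket_bvecl // Hdd.
Qed.

Section EquationsExt.
Variables (f g : nat -> nat -> C).
Hypothesis Efg : forall i t, (i <= N)%N -> (t < N)%N -> f i t = g i t.

Lemma capp_brb_ext i j t : (i < N)%N -> (t < N)%N -> capp_brb f i j t = capp_brb g i j t.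
Proof.
move=> Hi Ht; case: j => [|[|[|j]]] //=; case: i Hi => [|[|[|a]]] Hi //=.
all: by rewrite Efg // ltnW.
Qed.

Lemma cbracket_extl y i t : (i < N)%N -> (t < N)%N -> cbracket (f i) y t = cbracket (g i) y t.
Proof. by move=> Hi Ht; apply: cbracket_ext => // s Hs; rewrite Efg // ltnW. Qed.

Lemma cbracket_extr x i t : (i < N)%N -> (t < N)%N -> cbracket x (f i) t = cbracket x (g i) t.
Proof. by move=> Hi Ht; apply: cbracket_ext => // s Hs; rewrite Efg // ltnW. Qed.

Lemma der_eqs_ext : der_eqs g -> der_eqs f.
Proof.
move=> Hg i j t Hi Hj Ht.
by rewrite capp_brb_ext // cbracket_extl // cbracket_extr // Hg.
Qed.

Lemma antider_eqs_ext : antider_eqs g -> antider_eqs f.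
Proof.
move=> Hg i j t Hi Hj Ht.
by rewrite capp_brb_ext // !cbracket_extl // Hg.
Qed.

End EquationsExt.

Lemma agree_eqs_ext f f' g g' :
  (forall i t, (i <= N)%N -> (t < N)%N -> f i t = f' i t) ->
  (forall i t, (i <= N)%N -> (t < N)%N -> g i t = g' i t) ->
  agree_eqs f' g' -> agree_eqs f g.
Proof.
move=> Ef Eg Hfg i j t Hi Hj Ht.
by rewrite (cbracket_extr Ef) // (cbracket_extr Eg) // Hfg.
Qed.

End Coordinates.

Ltac simp_eqn H :=
  rewrite /capp_brb /cbracket /delta /= ?eqxx ?eqSS ?eqSnF /= in H.

(* [lin_solve H] proves [x = y] when [x - y] is, up to ring normalisation, plus
   or minus the difference of the two sides of [H]; [lin_solve2] combines two
   equations. *)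
Ltac lin_solve H :=
  rewrite /=; first [apply: (eq_from_eqn H); ring | apply: (eq_from_eqn (esym H)); ring].

Ltac lin_solve2 H1 H2 := first
  [ apply: (eq_from_eqn2 H1 H2); ring | apply: (eq_from_eqn2 H2 H1); ring
  | apply: (eq_from_eqn2 (esym H1) H2); ring | apply: (eq_from_eqn2 H1 (esym H2)); ring ].

Section Canonical.
Variable R : realType.
Local Notation C := R[i].

(* The coefficients of the biderivations of the theorem: [canon_d a1 a2 a3 i t]
   is the t-th coordinate of d(b_i), and [canon_D] describes D likewise. *)
Definition canon_d (a1 a2 a3 : C) (i t : nat) : C :=
  match i, t with
  | 1%N, 2%N => - a2
  | 2%N, 2%N => a3
  | a.+3, _ => if t == a.+3 then a1 + a.+1%:R * a3 else if t == a.+4 then a2 else 0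
  | _, _ => 0
  end.

Definition canon_D (a2 a3 : C) (b : nat -> C) (i t : nat) : C :=
  match i, t with
  | 0%N, s.+3 => b s.+3
  | 1%N, 2%N => - a2
  | 1%N, s.+3 => s.+1%:R * b s.+3
  | 2%N, 2%N => a3
  | 2%N, s.+4 => b s.+3
  | _, _ => 0
  end.

End Canonical.

Ltac coord_crush :=
  rewrite /capp_brb /cbracket /delta /canon_d /canon_D /=;
  repeat (rewrite ?eqxx ?eqSS ?eqSnF ?ltnS /=;
          case: eqP => [?|?]; subst; try (exfalso; lia));
  rewrite ?eqxx ?eqSS ?eqSnF ?ltnS /=; ring.

Section CanonicalSolves.
Variables (R : realType) (n : nat).
Local Notation C := R[i].

Lemma canon_d_der_eqs a1 a2 a3 : @der_eqs R n (canon_d a1 a2 a3).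
Proof.
move=> i j t _ _ _.
by case: j => [|[|[|c]]]; case: i => [|[|[|a]]]; case: t => [|[|[|[|s]]]]; coord_crush.
Qed.

Lemma canon_D_antider_eqs a2 a3 b : @antider_eqs R n (canon_D a2 a3 b).
Proof.
move=> i j t _ _ _.
by case: j => [|[|[|c]]]; case: i => [|[|[|a]]]; case: t => [|[|[|[|s]]]]; coord_crush.
Qed.

Lemma canon_agree_eqs a1 a2 a3 b : @agree_eqs R n (canon_d a1 a2 a3) (canon_D a2 a3 b).
Proof.
move=> i j t _ _ _.
by case: j => [|[|[|c]]]; case: i => [|[|[|a]]]; case: t => [|[|[|[|s]]]]; coord_crush.
Qed.

End CanonicalSolves.

Section DerivationEquations.
Variables (R : realType) (m : nat).
Local Notation C := R[i].
Local Notation n := m.+4.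
Local Notation N := n.+2.
Variable U : nat -> nat -> C.
Hypothesis HU : @der_eqs R n U.

Lemma der_h1 t : (t < N)%N -> U 0%N t = 0.
Proof.
have E1 := @HU 3%N 0%N 3%N isT isT isT; simp_eqn E1.
have E2 := @HU 3%N 0%N 4%N isT isT isT; simp_eqn E2.
have E3 := @HU 4%N 0%N 4%N isT isT isT; simp_eqn E3.
have U01 : U 0%N 1%N = 0 by lin_solve2 E1 E3.
case: t => [|[|[|s]]] Ht //.
- by rewrite U01 in E1; lin_solve E1.
- by lin_solve E2.
have E := @HU 0%N 0%N s.+3 isT isT Ht; simp_eqn E.
by case: s Ht E => [|s] Ht E; lin_solve E.
Qed.

Lemma der_h2 t : (t < N)%N -> t != 2%N -> U 1%N t = 0.
Proof.
have E := @HU 1%N 2%N 2%N isT isT isT; simp_eqn E.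
have U11 : U 1%N 1%N = 0 by lin_solve E.
case: t => [|[|[|s]]] Ht // _.
- have E' := @HU 3%N 1%N 3%N isT isT isT; simp_eqn E'.
  by rewrite U11 in E'; lin_solve E'.
have E' := @HU 1%N 0%N s.+3 isT isT Ht; simp_eqn E'.
by rewrite !der_h1 // in E'; case: s Ht E' => [|s] Ht E'; lin_solve E'.
Qed.

Lemma der_e1 t : (t < N)%N -> t != 2%N -> U 2%N t = 0.
Proof.
case: t => [|[|[|s]]] Ht // _.
- by have E := @HU 1%N 2%N 0%N isT isT isT; simp_eqn E; lin_solve E.
- by have E := @HU 1%N 2%N 1%N isT isT isT; simp_eqn E; lin_solve E.
have E := @HU 2%N 0%N s.+3 isT isT Ht; simp_eqn E.
by rewrite !der_h1 // in E; case: s Ht E => [|s] Ht E; lin_solve E.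
Qed.

Lemma der_e_low a t : (a.+3 < N)%N -> (t <= 2)%N -> U a.+3 t = 0.
Proof.
move=> Ha; case: t => [|[|[|]]] // _.
- by have E := @HU a.+3 0%N 0%N Ha isT isT; simp_eqn E; lin_solve E.
- by have E := @HU a.+3 0%N 1%N Ha isT isT; simp_eqn E; lin_solve E.
have E := @HU a.+3 0%N 2%N Ha isT isT; simp_eqn E.
by rewrite !der_h1 // in E; lin_solve E.
Qed.

Lemma der_e_diag a :
  (a.+3 < N)%N -> U a.+3 a.+3 = (U 3%N 3%N - U 2%N 2%N) + a.+1%:R * U 2%N 2%N.
Proof.
elim: a => [_|a IH Ha]; first ring.
have E := @HU a.+3 2%N a.+4 (ltnW Ha) isT Ha; simp_eqn E.
by rewrite IH ?(ltnW Ha) // in E; lin_solve E.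
Qed.

(* Off-diagonal entries die by comparing the weights of right multiplication
   by h2. *)
Lemma der_e_coef a t : (a.+3 < N)%N -> (t < N)%N ->
  U a.+3 t = canon_d (U 3%N 3%N - U 2%N 2%N) (- U 1%N 2%N) (U 2%N 2%N) a.+3 t.
Proof.
move=> Ha; case: t => [|[|[|[|s]]]] Ht; try by rewrite der_e_low.
- have E := @HU a.+3 1%N 3%N Ha isT isT; simp_eqn E.
  rewrite (@der_h2 0) ?(@der_h2 1) // in E.
  case: a Ha E => [|a] Ha E; first by rewrite /= ?eqxx; ring.
  by apply: (@natr_mul_cancel _ a.+2 1) => //; lin_solve E.
have E := @HU a.+3 1%N s.+4 Ha isT Ht; simp_eqn E.
rewrite (@der_h2 0) ?(@der_h2 1) // in E.
rewrite /= !eqSS; case: (eqVneq s.+1 a) => [Ea|Na].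
  by rewrite -Ea der_e_diag.
case: (eqVneq s a) => [Ea|Na'].
  by rewrite -Ea ?eqxx ?eqSnF /= in E *; lin_solve E.
apply: (@natr_mul_cancel _ a.+1 s.+2); first by apply: contra_neq Na; lia.
by rewrite (negPf Na) (negPf Na') /= in E; lin_solve E.
Qed.

Lemma der_eqs_solution i t : (i < N)%N -> (t < N)%N ->
  U i t = canon_d (U 3%N 3%N - U 2%N 2%N) (- U 1%N 2%N) (U 2%N 2%N) i t.
Proof.
case: i => [|[|[|a]]] Hi Ht; last exact: der_e_coef.
- exact: der_h1.
- case: (eqVneq t 2%N) => [->|Nt]; first by rewrite /= opprK.
  by rewrite der_h2 //; case: t Ht Nt => [|[|[|]]].
- by case: (eqVneq t 2%N) => [->|Nt] //; rewrite der_e1 //; case: t Ht Nt => [|[|[|]]].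
Qed.

End DerivationEquations.

Section AntiderivationEquations.
Variables (R : realType) (m : nat).
Local Notation C := R[i].
Local Notation n := m.+4.
Local Notation N := n.+2.
Variables U W : nat -> nat -> C.
Hypothesis HU : @der_eqs R n U.
Hypothesis HW : @antider_eqs R n W.
Hypothesis HUW : @agree_eqs R n U W.

Lemma agree_low j t : (j < N)%N -> (t <= 2)%N -> W j t = U j t.
Proof.
move=> Hj Ht.
have E1 := @HUW 3%N j 3%N isT Hj isT; simp_eqn E1.
have E2 := @HUW 3%N j 4%N isT Hj isT; simp_eqn E2.
have E3 := @HUW 4%N j 4%N isT Hj isT; simp_eqn E3.
have W1 : W j 1%N = U j 1%N by lin_solve2 E1 E3.
case: t Ht => [|[|[|]]] // _.
- by rewrite W1 in E1; lin_solve E1.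
- by lin_solve E2.
Qed.

Lemma antider_e_high a s : (a.+3 < N)%N -> (s.+4 < N)%N -> W a.+3 s.+3 = 0.
Proof. by move=> Ha Hs; have E := @HW 2%N a.+3 s.+4 isT Ha Hs; simp_eqn E; lin_solve E. Qed.

Lemma antider_e_last a : (a.+3 < N)%N -> W a.+3 n.+1 = 0.
Proof.
move=> Ha; case: (eqVneq a m.+2) => [->|Na].
  have E := @HW n 2%N n.+1 (leqnSn _) isT (ltnSn _); simp_eqn E.
  by rewrite (@antider_e_high m.+1 m.+1) // in E; lin_solve E.
have E := @HW a.+3 1%N n.+1 Ha isT (ltnSn _); simp_eqn E.
apply: (@natr_mul_cancel _ a.+1 m.+3); first by apply: contra_neq Na; lia.
by lin_solve E.
Qed.

Lemma antider_eqs_solution i t : (i < N)%N -> (t < N)%N ->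
  W i t = canon_D (- U 1%N 2%N) (U 2%N 2%N) (W 0%N) i t.
Proof.
move=> Hi Ht; case: (leqP t 2) => [Ht2|].
  rewrite agree_low // (der_eqs_solution HU) //.
  by case: i Hi => [|[|[|a]]] Hi; case: t Ht Ht2 => [|[|[|]]] //= *.
case: t Ht => [|[|[|s]]] // Ht _; case: i Hi => [|[|[|a]]] Hi //.
- have E := @HW 0%N 1%N s.+3 isT isT Ht; simp_eqn E.
  by case: s Ht E => [|s] Ht E; lin_solve E.
- have E := @HW 0%N 2%N s.+3 isT isT Ht; simp_eqn E.
  by case: s Ht E => [|s] Ht E; lin_solve E.
rewrite /=; case: (ltnP s.+4 N) => Hs; first exact: antider_e_high.
have -> : s = m.+2 by lia.
exact: antider_e_last.
Qed.

End AntiderivationEquations.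

Section Biderivations.
Variables (R : realType) (m : nat).
Local Notation C := R[i].
Local Notation n := m.+4.
Local Notation N := n.+2.

Lemma coef_extend (A : 'M[C]_N) (f : nat -> nat -> C) :
  (forall t, (t < N)%N -> f N t = 0) ->
  (forall i t, (i < N)%N -> (t < N)%N -> coef A i t = f i t) ->
  forall i t, (i <= N)%N -> (t < N)%N -> coef A i t = f i t.
Proof.
move=> fN EAf i t; rewrite leq_eqVlt => /orP[/eqP -> Ht|]; last exact: EAf.
by rewrite fN // /coef bvec_out // app0 ncoord0.
Qed.

Lemma is_biderivation_coef (d D : 'M[C]_N) :
  is_biderivation d D <->
  exists a1 a2 a3 (b : nat -> C),
    (forall i t, (i < N)%N -> (t < N)%N -> coef d i t = canon_d a1 a2 a3 i t) /\
    (forall i t, (i < N)%N -> (t < N)%N -> coef D i t = canon_D a2 a3 b i t).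
Proof.
split=> [[/is_derivationP Hd /is_antiderivationP HD /bracket_app_eqP HdD] | ].
  exists (coef d 3 3 - coef d 2 2), (- coef d 1 2), (coef d 2 2), (coef D 0).
  split=> i t Hi Ht; first exact: (der_eqs_solution Hd).
  exact: (antider_eqs_solution Hd HD HdD).
move=> [a1 [a2 [a3 [b [Ed ED]]]]].
have dN t : (t < N)%N -> canon_d a1 a2 a3 N t = 0.
  by move=> Ht /=; rewrite !ifN_eq //; apply/eqP; lia.
have DN t : (t < N)%N -> canon_D a2 a3 b N t = 0 by case: t => [|[|[|]]].
have {dN}Ed := coef_extend dN Ed; have {DN}ED := coef_extend DN ED.
split.
- by apply/is_derivationP; apply: (der_eqs_ext Ed); apply: canon_d_der_eqs.
- by apply/is_antiderivationP; apply: (antider_eqs_ext ED); apply: canon_D_antider_eqs.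
- by apply/bracket_app_eqP; apply: (agree_eqs_ext Ed ED); apply: canon_agree_eqs.
Qed.

End Biderivations.

Section Rows.
Variables (R : realType) (n : nat).
Local Notation C := R[i].
Local Notation N := n.+2.

Lemma app_bvecP (A : 'M[C]_N) i v (g : nat -> C) :
  (forall t, (t < N)%N -> ncoord v t = g t) ->
  app A (bvec R n i) = v <-> forall t, (t < N)%N -> coef A i t = g t.
Proof.
move=> Evg; split=> [Ev t Ht | EAg]; first by rewrite /coef Ev Evg.
by apply: row_ncoordP => t Ht; rewrite Evg // -EAg.
Qed.

Lemma forall_ltN (P : nat -> Prop) : (0 < n)%N ->
  (forall i, (i < N)%N -> P i) <-> [/\ P 0%N, P 1%N, P 2%N & forall k, (2 <= k <= n)%N -> P k.+1].
Proof.
move=> Hn; split=> [HP | [P0 P1 P2 Pk] [|[|[|k]]] Hk //].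
  by split=> [||| k Hk]; apply: HP; lia.
by apply: Pk; lia.
Qed.

Lemma ncoord_sum_e p (f : nat -> C) t : (0 < p)%N -> (t < N)%N ->
  ncoord (\sum_(p <= k < n.+1) f k *: e R n k) t = if (p < t)%N then f t.-1 else 0.
Proof.
move=> Hp Ht; rewrite ncoord_sum.
rewrite (eq_big_nat _ _ (F2 := fun k => f k * delta R k.+1 t)); last first.
  by move=> k /andP[Hk _]; rewrite ncoordZ ncoord_e //; apply: leq_trans Hk.
rewrite (big_nat_single (p := t.-1)) => [|k _ Hk]; last first.
  by rewrite /delta; case: eqP => [Et|]; [move: Hk; rewrite Et eqxx | rewrite mulr0].
case: t Ht => [|t] Ht /=; first by rewrite ifF //; lia.
by rewrite /delta eqxx mulr1 !ltnS (_ : (t <= n)%N) ?andbT //; lia.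
Qed.

End Rows.

Section Specs.
Variables (R : realType) (m : nat).
Local Notation C := R[i].
Local Notation n := m.+4.
Local Notation N := n.+2.
Local Notation e := (e R n).

Lemma coef_eq_rows (A : 'M[C]_N) (f : nat -> nat -> C) :
  (forall i t, (i < N)%N -> (t < N)%N -> coef A i t = f i t) <->
  [/\ forall t, (t < N)%N -> coef A 0 t = f 0%N t,
      forall t, (t < N)%N -> coef A 1 t = f 1%N t,
      forall t, (t < N)%N -> coef A 2 t = f 2%N t &
      forall k, (2 <= k <= n)%N -> forall t, (t < N)%N -> coef A k.+1 t = f k.+1 t].
Proof.
transitivity (forall i, (i < N)%N -> forall t, (t < N)%N -> coef A i t = f i t).
  by split=> EAf i => [t|]; [move=> Hi Ht | move=> Hi t Ht]; apply: EAf.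
exact: forall_ltN.
Qed.

Lemma coef_d_spec (d : 'M[C]_N) a1 a2 a3 :
  (forall i t, (i < N)%N -> (t < N)%N -> coef d i t = canon_d a1 a2 a3 i t) <->
  [/\ app d (h1 R n) = 0, app d (h2 R n) = - (a2 *: e 1), app d (e 1) = a3 *: e 1 &
      forall k, (2 <= k <= n)%N ->
        app d (e k) = (a1 + k.-1%:R * a3) *: e k + a2 *: e k.+1].
Proof.
have row_k k : (2 <= k <= n)%N ->
    app d (e k) = (a1 + k.-1%:R * a3) *: e k + a2 *: e k.+1 <->
    forall t, (t < N)%N -> coef d k.+1 t = canon_d a1 a2 a3 k.+1 t.
  move=> Hk; rewrite !(@e_bvec _ _ k) 1?(@e_bvec _ _ k.+1) //; try lia.
  apply: app_bvecP => t Ht; rewrite ncoordD !ncoordZ !ncoord_bvec //.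
  by case: k Hk => [|[|k]] // _; coord_crush.
rewrite coef_eq_rows; apply: and4_iff; apply: iff_sym.
- by apply: app_bvecP => t Ht; rewrite ncoord0; case: t Ht => [|[|[|]]].
- apply: app_bvecP => t Ht; rewrite ncoordN ncoordZ ncoord_e //.
  by case: t Ht => [|[|[|t]]] Ht; coord_crush.
- rewrite [in app _ _]e_bvec //; apply: app_bvecP => t Ht; rewrite ncoordZ ncoord_e //.
  by case: t Ht => [|[|[|t]]] Ht; coord_crush.
by split=> Ed k Hk; apply/(row_k k Hk); apply: Ed.
Qed.

Lemma coef_D_spec (D : 'M[C]_N) a2 a3 (b : nat -> C) :
  (forall i t, (i < N)%N -> (t < N)%N -> coef D i t = canon_D a2 a3 b i t) <->
  [/\ app D (h1 R n) = \sum_(2 <= k < n.+1) b k.+1 *: e k,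
      app D (h2 R n) = - (a2 *: e 1) + \sum_(2 <= k < n.+1) (k.-1%:R * b k.+1) *: e k,
      app D (e 1) = a3 *: e 1 + \sum_(3 <= k < n.+1) b k *: e k &
      forall k, (2 <= k <= n)%N -> app D (e k) = 0].
Proof.
rewrite coef_eq_rows; apply: and4_iff; apply: iff_sym.
- apply: app_bvecP => t Ht; rewrite ncoord_sum_e //.
  by case: t Ht => [|[|[|t]]] Ht; coord_crush.
- apply: app_bvecP => t Ht; rewrite ncoordD ncoordN ncoordZ ncoord_e // ncoord_sum_e //.
  by case: t Ht => [|[|[|t]]] Ht; coord_crush.
- rewrite [in app _ _]e_bvec //; apply: app_bvecP => t Ht.
  rewrite ncoordD ncoordZ ncoord_e // ncoord_sum_e //.
  by case: t Ht => [|[|[|[|t]]]] Ht; coord_crush.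
have canon_D_e k t : (2 <= k)%N -> canon_D a2 a3 b k.+1 t = 0 by case: k => [|[|k]].
split=> ED k Hk.
  by move=> t Ht; rewrite /coef -e_bvec ?ED ?ncoord0 ?canon_D_e //; lia.
rewrite e_bvec; last lia.
by apply: row_ncoordP => t Ht; rewrite ncoord0 -(canon_D_e k t) -?ED //; lia.
Qed.

End Specs.

Theorem mainTheorem11 (R : realType) (n : nat) (hn : (4 <= n)%N)
    (d D : 'M[R[i]]_(n.+2)) :
  is_biderivation d D <->
  exists (a1 a2 a3 : R[i]) (b : nat -> R[i]),
    app d (h1 R n) = 0 /\
        app d (h2 R n) = - (a2 *: e R n 1) /\
        app d (e R n 1) = a3 *: e R n 1 /\
        (forall k : nat, (2 <= k <= n)%N ->
           app d (e R n k) = (a1 + (k.-1)%:R * a3) *: e R n k + a2 *: e R n k.+1) /\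
        app D (h1 R n) = (\sum_(2 <= k < n.+1) b k.+1 *: e R n k) /\
        app D (h2 R n) = - (a2 *: e R n 1) + (\sum_(2 <= k < n.+1) ((k.-1)%:R * b k.+1) *: e R n k) /\
        app D (e R n 1) = a3 *: e R n 1 + (\sum_(3 <= k < n.+1) b k *: e R n k) /\
      (forall k : nat, (2 <= k <= n)%N -> app D (e R n k) = 0).
Proof.
case: n hn d D => [|[|[|[|m]]]] // _ d D.
rewrite is_biderivation_coef.
split=> [[a1 [a2 [a3 [b [/coef_d_spec[? ? ? ?] /coef_D_spec[? ? ? ?]]]]]]|].
  by exists a1, a2, a3, b.
move=> [a1 [a2 [a3 [b [? [? [? [? [? [? [? ?]]]]]]]]]]].
by exists a1, a2, a3, b; split; [apply/coef_d_spec | apply/coef_D_spec].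
Qed.
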